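(* Let $(A,L',L'')$ be an almost twilled Lie-Rinehart algebra with $L'$ finitely generated and projective as an $A$-module, and consider $\mathcal L'=\mathrm{Alt}_A(L'',L')$ with its bracket $[\cdot,\cdot]'$ and operator $d''$. Given $x,y\in L'$ (viewed as elements of degree $0$ in $\mathcal L'$), one has $d''[x,y]'=[d''x,y]'+[x,d''y]'$ if and only if $\xi\cdot[x,y]'=[\xi\cdot x,y]'+[x,\xi\cdot y]'-(x\cdot\xi)\cdot y+(y\cdot\xi)\cdot x$ for every $\xi\in L''$. Consequently, $d''[x,y]'=[d''x,y]'+[x,d''y]'$ holds for all $x,y\in L'$ if and only if $\xi\cdot[x,y]'=[\xi\cdot x,y]'+[x,\xi\cdot y]'-(x\cdot\xi)\cdot y+(y\cdot\xi)\cdot x$ holds for all $x,y\in L'$, $\xi\in L''$.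
   Context: $R$ commutative ring, $A$ commutative $R$-algebra. Lie-Rinehart algebra $(A,L)$: $R$-Lie algebra and $A$-module $L$ with Lie morphism $L\to\mathrm{Der}_R(A)$ such that $(a\alpha)(b)=a\,\alpha(b)$, $[\alpha,a\beta]=\alpha(a)\beta+a[\alpha,\beta]$. Left $(A,L)$-module: $A$-module with left $L$-module structure with $(a\alpha)\cdot m=a(\alpha\cdot m)$, $\alpha\cdot(am)=\alpha(a)m+a(\alpha\cdot m)$. Almost twilled Lie-Rinehart algebra $(A,L',L'')$: Lie-Rinehart algebras $(A,L')$, $(A,L'')$ with brackets $[\cdot,\cdot]',[\cdot,\cdot]''$, a left $(A,L')$-module structure $(x,\xi)\mapsto x\cdot\xi$ on $L''$, a left $(A,L'')$-module structure $(\xi,x)\mapsto\xi\cdot x$ on $L'$. $\mathcal A''=\mathrm{Alt}_A(L'',A)$ (graded by number of arguments), with $L'$-action $(x\cdot\phi)(\xi_1,..,\xi_q)=x(\phi(\xi_1,..,\xi_q))-\sum_i\phi(..,x\cdot\xi_i,..)$. $\mathcal L'=\mathcal A''\otimes_AL'\cong\mathrm{Alt}_A(L'',L')$ with bracket $[\alpha\otimes x,\beta\otimes y]'=\alpha\beta\otimes[x,y]'+\alpha(x\cdot\beta)\otimes y-(-1)^{|\alpha||\beta|}\beta(y\cdot\alpha)\otimes x$. The operator $d''$ on $\mathrm{Alt}_A(L'',L')$ is the Lie-Rinehart differential of $(A,L'')$ with values in the left $(A,L'')$-module $L'$; in particular $(d''x)(\xi)=\xi\cdot x$ for $x\in L'$,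 $\xi\in L''$ (up to the sign convention $(df)(\alpha_1,\dots,\alpha_n)=(-1)^n[\sum_i(-1)^{i-1}\alpha_i\cdot f(\dots\widehat{\alpha_i}\dots)+\sum_{j<k}(-1)^{j+k}f([\alpha_j,\alpha_k],\dots)]$). *)

From HB Require Import structures.
From mathcomp Require Import all_boot all_order all_algebra.
From Stdlib Require Lists.List.
Set Implicit Arguments. Unset Strict Implicit. Unset Printing Implicit Defensive.
Import GRing.Theory.
Local Open Scope ring_scope.

(* R : commutative ring, A : commutative R-algebra. The R-module structure on
   an A-module is the restriction of scalars along r |-> r%:A. *)

Definition is_derivation (R : comNzRingType) (A : comAlgType R) (D : A -> A) : Prop :=
  [/\ forall a b, D (a + b) = D a + D b,
      forall (r : R) a, D (r *: a) = r *: D a &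
      forall a b, D (a * b) = a * D b + D a * b].

Record is_LieRinehart (R : comNzRingType) (A : comAlgType R) (L : lmodType A)
    (br : L -> L -> L) (anc : L -> A -> A) : Prop := {
  lr_addl : forall x y z, br (x + y) z = br x z + br y z;
  lr_addr : forall x y z, br x (y + z) = br x y + br x z;
  lr_scalel : forall (r : R) x y, br (r%:A *: x) y = r%:A *: br x y;
  lr_scaler : forall (r : R) x y, br x (r%:A *: y) = r%:A *: br x y;
  lr_alt : forall x, br x x = 0;
  lr_jacobi : forall x y z, br x (br y z) + br y (br z x) + br z (br x y) = 0;
  lr_der : forall x, is_derivation (anc x);
  lr_anc_add : forall x y a, anc (x + y) a = anc x a + anc y a;
  lr_anc_lie : forall x y a, anc (br x y) a = anc x (anc y a) - anc y (anc x a);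
  lr_anc_Alin : forall (a : A) x b, anc (a *: x) b = a * anc x b;
  lr_leibniz : forall x (a : A) y, br x (a *: y) = anc x a *: y + a *: br x y }.

Record is_LRmodule (R : comNzRingType) (A : comAlgType R) (L M : lmodType A)
    (br : L -> L -> L) (anc : L -> A -> A) (act : L -> M -> M) : Prop := {
  lm_addl : forall x y m, act (x + y) m = act x m + act y m;
  lm_addr : forall x m n, act x (m + n) = act x m + act x n;
  lm_scalel : forall (r : R) x m, act (r%:A *: x) m = r%:A *: act x m;
  lm_scaler : forall (r : R) x m, act x (r%:A *: m) = r%:A *: act x m;
  lm_lie : forall x y m, act (br x y) m = act x (act y m) - act y (act x m);
  lm_Alin : forall (a : A) x m, act (a *: x) m = a *: act x m;
  lm_leibniz : forall x (a : A) m, act x (a *: m) = anc x a *: m + a *: act x m }.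

(** Almost twilled Lie-Rinehart algebra (A, L1, L2)  [L1 = L', L2 = L''].
    act12 x xi = x . xi  (L' acting on L''),  act21 xi x = xi . x (L'' on L'). *)
Record almost_twilled (R : comNzRingType) (A : comAlgType R) (L1 L2 : lmodType A)
    (br1 : L1 -> L1 -> L1) (anc1 : L1 -> A -> A)
    (br2 : L2 -> L2 -> L2) (anc2 : L2 -> A -> A)
    (act12 : L1 -> L2 -> L2) (act21 : L2 -> L1 -> L1) : Prop := {
  at_LR1 : is_LieRinehart br1 anc1;
  at_LR2 : is_LieRinehart br2 anc2;
  at_mod12 : is_LRmodule br1 anc1 act12;
  at_mod21 : is_LRmodule br2 anc2 act21 }.

Definition fg_projective (A : comNzRingType) (L : lmodType A) : Prop :=
  exists (n : nat) (p : 'rV[A]_n -> L) (s : L -> 'rV[A]_n),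
    [/\ forall (a : A) u v, p (a *: u + v) = a *: p u + p v,
        forall (a : A) x y, s (a *: x + y) = a *: s x + s y &
        forall x, p (s x) = x].

Definition is_Aform (A : comNzRingType) (M : lmodType A) (f : M -> A) : Prop :=
  forall (a : A) u v, f (a *: u + v) = a * f u + f v.

Section Twilled.
Variables (R : comNzRingType) (A : comAlgType R) (L1 L2 : lmodType A)
  (br1 : L1 -> L1 -> L1) (anc1 : L1 -> A -> A)
  (act12 : L1 -> L2 -> L2) (act21 : L2 -> L1 -> L1).

(** The L'-action on A'' in degrees 0 and 1:
    (x . a) = x(a) for a in Alt^0 = A;
    (x . alpha)(xi) = x(alpha xi) - alpha (x . xi) for alpha in Alt^1. *)
Definition act_form0 (x : L1) (a : A) : A := anc1 x a.
Definition act_form1 (x : L1) (al : L2 -> A) : L2 -> A :=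
  fun xi => anc1 x (al xi) - al (act12 x xi).

(** Elements of the degree-0 and degree-1 components of
    L' = A'' (x)_A L', as finite sums of elementary tensors. *)
Definition tens0 := seq (A * L1).
Definition tens1 := seq ((L2 -> A) * L1).

(** The isomorphism A'' (x)_A L' -> Alt_A(L'', L') in degrees 0 and 1. *)
Definition ev0 (t : tens0) : L1 := \sum_(p <- t) p.1 *: p.2.
Definition ev1 (t : tens1) : L2 -> L1 := fun xi => \sum_(p <- t) p.1 xi *: p.2.

Definition rep1 (t : tens1) (phi : L2 -> L1) : Prop :=
  List.Forall (fun p => is_Aform p.1) t /\ forall xi, phi xi = ev1 t xi.

(** The bracket
    [al (x) x, be (x) y]' = al be (x) [x,y]' + al (x . be) (x) y
                           - (-1)^{|al||be|} be (y . al) (x) x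
    on elementary tensors, for the degrees (1,0) and (0,1). *)
Definition brel10 (p : (L2 -> A) * L1) (q : A * L1) : tens1 :=
  let: (al, x) := p in let: (b, y) := q in
  [:: (fun xi => al xi * b, br1 x y);
      (fun xi => al xi * act_form0 x b, y);
      (fun xi => - (b * act_form1 y al xi), x)].
Definition brel01 (p : A * L1) (q : (L2 -> A) * L1) : tens1 :=
  let: (a, x) := p in let: (be, y) := q in
  [:: (fun xi => a * be xi, br1 x y);
      (fun xi => a * act_form1 x be xi, y);
      (fun xi => - (be xi * act_form0 y a), x)].

Definition br10 (t : tens1) (s : tens0) : tens1 :=
  flatten [seq brel10 p q | p <- t, q <- s].
Definition br01 (t : tens0) (s : tens1) : tens1 :=
  flatten [seq brel01 p q | p <- t, q <- s].

Definition deg0 (x : L1) : tens0 := [:: (1, x)].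

(** d'' : L' -> Alt^1_A(L'',L'), the Lie-Rinehart differential of (A,L'')
    with values in L', with the sign convention (df)(xi) = - xi . f. *)
Definition d2 (x : L1) : L2 -> L1 := fun xi => - act21 xi x.

End Twilled.

From HB Require Import structures.
From mathcomp Require Import all_boot all_order all_algebra.
Import GRing.Theory.
Local Open Scope ring_scope.
Set Implicit Arguments. Unset Strict Implicit. Unset Printing Implicit Defensive.

(* Evaluated at xi, the bracket of a degree-one tensor t with a degree-zero y
   is [t(xi), y]' + t(y . xi), and symmetrically [x, s]'(xi) is
   [x, s(xi)]' - s(x . xi).  Substituting (d''x)(xi) = - xi . x shows that
   ([d''x,y]' + [x,d''y]')(xi) is minus the right-hand side of the twilling
   identity, while (d''[x,y]')(xi) = - xi . [x,y]'.  Projectivity of L' is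
   only used to represent d''x and d''y as finite sums of elementary tensors. *)

Lemma morph_add0 (U V : zmodType) (f : U -> V) :
  {morph f : u v / u + v} -> f 0 = 0.
Proof. by move=> fD; apply: (@addrI _ (f 0)); rewrite -fD !addr0. Qed.

Lemma morph_addN (U V : zmodType) (f : U -> V) :
  {morph f : u v / u + v} -> {morph f : u / - u}.
Proof.
move=> fD u; apply: (@addrI _ (f u)).
by rewrite -fD !subrr (morph_add0 fD).
Qed.

Lemma derivation1 (R : comNzRingType) (A : comAlgType R) (D : A -> A) :
  is_derivation D -> D 1 = 0.
Proof.
rewrite /is_derivation => -[_ _ DM]; apply: (@addrI _ (D 1)).
by have := DM 1 1; rewrite !mulr1 mul1r addr0 => <-.
Qed.

Section LieRinehartBracket.
Variables (R : comNzRingType) (A : comAlgType R) (L : lmodType A).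
Variables (br : L -> L -> L) (anc : L -> A -> A).
Hypothesis HL : is_LieRinehart br anc.

Lemma lr_br0l y : br 0 y = 0.
Proof. exact: morph_add0 (fun u v => lr_addl HL u v y). Qed.

Lemma lr_br0r x : br x 0 = 0.
Proof. exact: morph_add0 (lr_addr HL x). Qed.

Lemma lr_brNl x y : br (- x) y = - br x y.
Proof. exact: (morph_addN (f := br^~ y) (fun u v => lr_addl HL u v y)). Qed.

Lemma lr_brNr x y : br x (- y) = - br x y.
Proof. exact: (morph_addN (f := br x) (lr_addr HL x)). Qed.

Lemma lr_anti x y : br x y = - br y x.
Proof.
apply/eqP; rewrite -addr_eq0; apply/eqP.
have := lr_alt HL (x + y).
by rewrite (lr_addl HL) !(lr_addr HL) !(lr_alt HL) add0r addr0.
Qed.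

Lemma lr_anc1 x : anc x 1 = 0.
Proof. exact: derivation1 (lr_der HL x). Qed.

Lemma lr_scalel a x y : br (a *: x) y = a *: br x y - anc y a *: x.
Proof.
by rewrite [LHS]lr_anti (lr_leibniz HL) opprD addrC -scalerN -lr_anti.
Qed.

End LieRinehartBracket.

Section BracketWithDegreeZero.
Variables (R : comNzRingType) (A : comAlgType R) (L1 L2 : lmodType A).
Variables (br1 : L1 -> L1 -> L1) (anc1 : L1 -> A -> A) (act12 : L1 -> L2 -> L2).
Hypothesis HL1 : is_LieRinehart br1 anc1.

Lemma ev1_flatten (ts : seq (tens1 L1 L2)) xi :
  ev1 (flatten ts) xi = \sum_(t <- ts) ev1 t xi.
Proof. by rewrite /ev1 big_flatten. Qed.

Lemma ev1_br10 t s xi :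
  ev1 (br10 br1 anc1 act12 t s) xi
    = \sum_(p <- t) \sum_(q <- s) ev1 (brel10 br1 anc1 act12 p q) xi.
Proof. by rewrite /br10 ev1_flatten big_allpairs_dep. Qed.

Lemma ev1_br01 t s xi :
  ev1 (br01 br1 anc1 act12 t s) xi
    = \sum_(p <- t) \sum_(q <- s) ev1 (brel01 br1 anc1 act12 p q) xi.
Proof. by rewrite /br01 ev1_flatten big_allpairs_dep. Qed.

Lemma ev1_brel10_deg0 p y xi :
  ev1 (brel10 br1 anc1 act12 p (1, y)) xi
    = br1 (p.1 xi *: p.2) y + p.1 (act12 y xi) *: p.2.
Proof.
case: p => al x.
rewrite /ev1 !big_cons big_nil /= /act_form0 /act_form1 (lr_anc1 HL1).
rewrite (lr_scalel HL1) mulr1 mulr0 scale0r add0r addr0 mul1r opprB scalerBl.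
by rewrite addrA addrAC.
Qed.

Lemma ev1_brel01_deg0 x q xi :
  ev1 (brel01 br1 anc1 act12 (1, x) q) xi
    = br1 x (q.1 xi *: q.2) - q.1 (act12 x xi) *: q.2.
Proof.
case: q => be y.
rewrite /ev1 !big_cons big_nil /= /act_form0 /act_form1 (lr_anc1 HL1).
rewrite (lr_leibniz HL1) !mul1r mulr0 oppr0 scale0r !addr0 scalerBl.
by rewrite addrA [be xi *: _ + _]addrC.
Qed.

Lemma ev1_br10_deg0 t y xi :
  ev1 (br10 br1 anc1 act12 t (deg0 y)) xi
    = br1 (ev1 t xi) y + ev1 t (act12 y xi).
Proof.
rewrite ev1_br10 /deg0; under eq_bigr => p _ do rewrite big_seq1 ev1_brel10_deg0.
rewrite big_split /ev1 /=.
by rewrite (big_morph (br1^~ y) (fun u v => lr_addl HL1 u v y) (lr_br0l HL1 y)).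
Qed.

Lemma ev1_br01_deg0 x s xi :
  ev1 (br01 br1 anc1 act12 (deg0 x) s) xi
    = br1 x (ev1 s xi) - ev1 s (act12 x xi).
Proof.
rewrite ev1_br01 /deg0 big_seq1; under eq_bigr => q _ do rewrite ev1_brel01_deg0.
rewrite big_split /ev1 /= sumrN.
by rewrite (big_morph (br1 x) (lr_addr HL1 x) (lr_br0r HL1 x)).
Qed.

End BracketWithDegreeZero.

Lemma fg_projective_rep1 (R : comNzRingType) (A : comAlgType R)
    (L1 L2 : lmodType A) (phi : L2 -> L1) :
  fg_projective L1 -> (forall (a : A) u v, phi (a *: u + v) = a *: phi u + phi v) ->
  exists t : tens1 L1 L2, rep1 t phi.
Proof.
case=> n [p [s [pL sL ps]]] phiL.
have pD : {morph p : u v / u + v} by move=> u v; rewrite -{1}[u]scale1r pL scale1r.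
have pZ a u : p (a *: u) = a *: p u by rewrite -[a *: u]addr0 pL (morph_add0 pD) addr0.
exists [seq (fun xi => s (phi xi) 0 i, p 'e_i) | i <- index_enum 'I_n]; split.
  apply/List.Forall_forall => _ /List.in_map_iff [i [<- _]] a u v /=.
  by rewrite phiL sL !mxE.
move=> xi; rewrite /ev1 big_map -{1}[phi xi]ps (row_sum_delta (s (phi xi))).
by rewrite (big_morph p pD (morph_add0 pD)); apply: eq_bigr => i _; rewrite pZ.
Qed.

Lemma d2_Alinear (R : comNzRingType) (A : comAlgType R) (L1 L2 : lmodType A)
    (br2 : L2 -> L2 -> L2) (anc2 : L2 -> A -> A) (act21 : L2 -> L1 -> L1) :
  is_LRmodule br2 anc2 act21 ->
  forall x (a : A) u v, d2 act21 x (a *: u + v) = a *: d2 act21 x u + d2 act21 x v.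
Proof. by move=> M21 x a u v; rewrite /d2 (lm_addl M21) (lm_Alin M21) opprD scalerN. Qed.

Lemma ev1_bracket_d2 (R : comNzRingType) (A : comAlgType R) (L1 L2 : lmodType A)
    (br1 : L1 -> L1 -> L1) (anc1 : L1 -> A -> A)
    (act12 : L1 -> L2 -> L2) (act21 : L2 -> L1 -> L1) x y t s xi :
  is_LieRinehart br1 anc1 -> rep1 t (d2 act21 x) -> rep1 s (d2 act21 y) ->
  ev1 (br10 br1 anc1 act12 t (deg0 y)) xi + ev1 (br01 br1 anc1 act12 (deg0 x) s) xi
    = - (br1 (act21 xi x) y + br1 x (act21 xi y)
         - act21 (act12 x xi) y + act21 (act12 y xi) x).
Proof.
move=> HL1 [_ tx] [_ sy].
rewrite (ev1_br10_deg0 _ HL1) (ev1_br01_deg0 _ HL1) -!tx -!sy /d2 (lr_brNl HL1) (lr_brNr HL1).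
by rewrite !opprD !opprK addrA [RHS]addrAC; congr (_ + _); rewrite addrAC.
Qed.

Unset Implicit Arguments. Set Strict Implicit.
Theorem lemma3p3 (R : comNzRingType) (A : comAlgType R) (L1 L2 : lmodType A)
    (br1 : L1 -> L1 -> L1) (anc1 : L1 -> A -> A)
    (br2 : L2 -> L2 -> L2) (anc2 : L2 -> A -> A)
    (act12 : L1 -> L2 -> L2) (act21 : L2 -> L1 -> L1)
    (HT : almost_twilled br1 anc1 br2 anc2 act12 act21)
    (HP : fg_projective L1) :
  let d2_der (x y : L1) : Prop :=
    (* d''[x,y]' = [d''x, y]' + [x, d''y]'  in  L'^1 = Alt^1_A(L'',L') *)
    forall (t s : tens1 L1 L2),
      rep1 t (d2 act21 x) -> rep1 s (d2 act21 y) ->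
      forall xi : L2,
        d2 act21 (br1 x y) xi =
          ev1 (br10 br1 anc1 act12 t (deg0 y)) xi
        + ev1 (br01 br1 anc1 act12 (deg0 x) s) xi in
  let twill_cond (x y : L1) : Prop :=
    forall xi : L2,
      act21 xi (br1 x y) =
        br1 (act21 xi x) y + br1 x (act21 xi y)
        - act21 (act12 x xi) y + act21 (act12 y xi) x in
  (forall x y : L1, d2_der x y <-> twill_cond x y) /\
  ((forall x y : L1, d2_der x y) <-> (forall x y : L1, twill_cond x y)).
Proof.
move=> d2_der twill_cond.
have [LR1 _ _ M21] := HT.
have d2_der_iff x y : d2_der x y <-> twill_cond x y.
  split=> [der xi | twill t s Ht Hs xi].
  - have [t Ht] := fg_projective_rep1 HP (d2_Alinear M21 x).
    have [s Hs] := fg_projective_rep1 HP (d2_Alinear M21 y).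
    by move: (der t s Ht Hs xi); rewrite (ev1_bracket_d2 _ _ LR1 Ht Hs) => /oppr_inj.
  - by rewrite (ev1_bracket_d2 _ _ LR1 Ht Hs) /d2 twill.
split=> //; split=> h x y; apply/d2_der_iff; exact: h.
Qed.
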